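(* There exists a rational Diophantine sextuple. Specifically, the set $$\left\{ \tfrac{11}{192},\ \tfrac{35}{192},\ \tfrac{155}{27},\ \tfrac{512}{27},\ \tfrac{1235}{48},\ \tfrac{180873}{16} \right\}$$ consists of six distinct positive rational numbers such that for any two distinct elements $x, y$ of the set, $xy+1$ is the square of a rational number.
   Context: A rational Diophantine $m$-tuple is a set of $m$ distinct positive rational numbers such that the product of any two distinct elements, plus $1$, is the square of a rational number. A sextuple is the case $m=6$. *)

From mathcomp Require Import all_boot all_order all_algebra.
Set Implicit Arguments. Unset Strict Implicit. Unset Printing Implicit Defensive.
Import Order.TTheory GRing.Theory Num.Theory.
Local Open Scope ring_scope.

Definition rat_diophantine_tuple (m : nat) (s : seq rat) : Prop :=
  [/\ size s = m, uniq s,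
      (forall x, x \in s -> 0 < x) &
      (forall x y, x \in s -> y \in s -> x != y ->
         exists r : rat, x * y + 1 = r ^+ 2)].

Definition rat_diophantine_sextuple (s : seq rat) : Prop :=
  rat_diophantine_tuple 6 s.

From mathcomp Require Import all_boot all_order all_algebra.
From mathcomp Require Import ring lra.
From Stdlib Require List.
Import Order.TTheory GRing.Theory Num.Theory.
Local Open Scope ring_scope.

Definition diophantine_pair {R : comPzRingType} (x y : R) : Prop :=
  exists r : R, x * y + 1 = r ^+ 2.

Lemma diophantine_pairC {R : comPzRingType} (x y : R) :
  diophantine_pair x y -> diophantine_pair y x.
Proof. by rewrite /diophantine_pair mulrC. Qed.

Lemma Forall_mem (T : eqType) (P : T -> Prop) (s : seq T) :
  List.Forall P s -> forall x, x \in s -> P x.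
Proof. by elim=> // a s' Pa _ IHs x; rewrite inE => /predU1P[-> | /IHs]. Qed.

Lemma rat_diophantine_tuple_path (s : seq rat) :
  path <%R 0 s -> List.ForallOrdPairs diophantine_pair s ->
  rat_diophantine_tuple (size s) s.
Proof.
move=> s_gt0 s_pairs; split=> //.
- exact/lt_sorted_uniq/(path_sorted s_gt0).
- by apply/allP; apply: order_path_min s_gt0; apply: lt_trans.
elim: s_pairs {s_gt0} => // a t a_pairs _ IHs x y.
rewrite !inE => /predU1P[-> | xs] /predU1P[-> | ys].
- by rewrite eqxx.
- by move=> _; apply: Forall_mem a_pairs y ys.
- by move=> _; apply: diophantine_pairC; apply: Forall_mem a_pairs x xs.
- exact: IHs.
Qed.

(* Written with nat casts, which [lra] and [field] understand, rather than
   the [%Q] literals of [mainTheorem1]; the two lists are convertible. *)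
Definition sextuple : seq rat :=
  [:: 11%:R / 192%:R; 35%:R / 192%:R; 155%:R / 27%:R; 512%:R / 27%:R;
      1235%:R / 48%:R; 81%:R * 2233%:R / 16%:R].

Lemma sextuple_increasing : path <%R 0 sextuple.
Proof. by do 6 (apply/andP; split; first lra). Qed.

Lemma sextuple_pairs : List.ForallOrdPairs diophantine_pair sextuple.
Proof.
repeat apply: List.FOP_cons; try exact: List.FOP_nil;
  repeat apply: List.Forall_cons; try exact: List.Forall_nil.
(* Square roots of x_i * x_j + 1, one line per i, for the pairs i < j. *)
all: [> exists (193%:R / 192%:R) | exists (83%:R / 72%:R) | exists (13%:R / 9%:R)
     | exists (151%:R / 96%:R) | exists (815%:R / 32%:R)
 | exists (103%:R / 72%:R) | exists (19%:R / 9%:R) | exists (229%:R / 96%:R)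
     | exists (1453%:R / 32%:R)
 | exists (283%:R / 27%:R) | exists (439%:R / 36%:R) | exists (1019%:R / 4%:R)
 | exists (199%:R / 9%:R) | exists 463%:R
 | exists (8629%:R / 16%:R)].
all: by field.
Qed.

Lemma rat_diophantine_sextuple_sextuple : rat_diophantine_sextuple sextuple.
Proof. exact: rat_diophantine_tuple_path sextuple_increasing sextuple_pairs. Qed.

Theorem mainTheorem1 :
  (exists s : seq rat, rat_diophantine_sextuple s) /\
  rat_diophantine_sextuple
    [:: 11%Q / 192%Q; 35%Q / 192%Q; 155%Q / 27%Q; 512%Q / 27%Q;
        1235%Q / 48%Q; (81%Q * 2233%Q) / 16%Q].
Proof.
split; first by exists sextuple; apply: rat_diophantine_sextuple_sextuple.
exact: rat_diophantine_sextuple_sextuple.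
Qed.
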